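(* For every positive integer $n$, the poset $\widetilde\Pi(\mathbb{Z}_n)$ is isomorphic (as a poset, hence as a lattice) to the subgroup lattice $\mathcal{L}(\mathbb{Z}_n)$; in particular, $\widetilde\Pi(\mathbb{Z}_n)$ is a lattice.
   Context: For a finite group $G$ and a subgroup $H\le G$, let $\pi_e(H)=\{o(x)\mid x\in H\}$. Let $\mathcal{L}(G)$ be the lattice of subgroups of $G$ ordered by inclusion; define $H_1\equiv H_2$ iff $\pi_e(H_1)=\pi_e(H_2)$, with class $[H]$. The poset $\widetilde\Pi(G)$ is $\mathcal{L}(G)/\!\equiv$ ordered by $[H_1]\lesssim[H_2]$ iff $\pi_e(H_1)\subseteq\pi_e(H_2)$. $\mathbb{Z}_n$ is the cyclic group of order $n$. *)

From mathcomp Require Import all_boot all_order all_algebra all_fingroup all_solvable.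
Set Implicit Arguments. Unset Strict Implicit. Unset Printing Implicit Defensive.
Local Open Scope group_scope.

Section PiTilde.
Variable gT : finGroupType.

(* pi_e(H): the set of element orders of H, as a subset of {0,...,#|gT|}
   (every element order is at most #|gT|, so no information is lost). *)
Definition piE (H : {set gT}) : {set 'I_(#|gT|).+1} :=
  [set i : 'I_(#|gT|).+1 | [exists x in H, #[x] == i :> nat]].

Definition piclass (G : {set gT}) (H : {group gT}) : {set {group gT}} :=
  [set K in subgroups G | piE K == piE H].

Definition PiT (G : {set gT}) : {set {set {group gT}}} :=
  [set piclass G H | H in subgroups G].

(* The order on classes: [H1] <~ [H2] iff pi_e(H1) \subset pi_e(H2)
   (independent of representatives). *)
Definition le_cls (C D : {set {group gT}}) : bool :=
  [exists H in C, exists K in D, piE H \subset piE K].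

End PiTilde.

From Pilot Require Import Defs.
From mathcomp Require Import all_boot all_order all_algebra all_fingroup all_solvable.
Local Open Scope group_scope.
Set Implicit Arguments. Unset Strict Implicit.

(* In a cyclic group every subgroup H is generated by an element of order #|H|,
   so #|H| lies in pi_e(H); moreover subgroups are determined by their orders and
   ordered by divisibility of orders.  Hence pi_e(H) \subset pi_e(K) iff #|H|
   divides #|K| iff H \subset K: every class [H] is a singleton, and H |-> [H]
   is an isomorphism of posets. *)

(* [Defs.piE] is written qualified: the later MathComp import shadows [piE]
   by a notation of generic_quotient. *)

Section Classes.
Variables (gT : finGroupType) (G : {set gT}).

Lemma mem_piclass (H : {group gT}) : H \in subgroups G -> H \in piclass G H.
Proof. by move=> sHG; rewrite inE sHG eqxx. Qed.

Lemma piE_piclass (H K : {group gT}) : K \in piclass G H -> Defs.piE K = Defs.piE H.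
Proof. by rewrite inE => /andP[_ /eqP]. Qed.

Lemma piclass_inj_piE (H K : {group gT}) :
  H \in subgroups G -> piclass G H = piclass G K -> Defs.piE H = Defs.piE K.
Proof. by move=> sHG eqHK; apply: piE_piclass; rewrite -eqHK mem_piclass. Qed.

Lemma le_cls_piclass (H K : {group gT}) :
  H \in subgroups G -> K \in subgroups G ->
  le_cls (piclass G H) (piclass G K) = (Defs.piE H \subset Defs.piE K).
Proof.
move=> sHG sKG; apply/existsP/idP => [[H1 /andP[H1H /existsP[K1 /andP[K1K]]]]|].
  by rewrite (piE_piclass H1H) (piE_piclass K1K).
move=> sHK; exists H; rewrite mem_piclass //=.
by apply/existsP; exists K; rewrite mem_piclass.
Qed.

End Classes.

Section CyclicOrderSpectrum.
Variables (gT : finGroupType) (G : {group gT}).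
Hypothesis cycG : cyclic G.

Lemma card_in_piE_cyclic (H : {group gT}) : H \subset G ->
  exists2 i : 'I_(#|gT|).+1, i \in Defs.piE H & i = #|H| :> nat.
Proof.
move=> sHG; have /cyclicP[x defH] := cyclicS sHG cycG.
have ltHT : #|H| < #|gT|.+1 by rewrite ltnS max_card.
exists (Ordinal ltHT) => //; rewrite inE; apply/existsP; exists x.
by rewrite /= orderE -defH eqxx andbT defH cycle_id.
Qed.

Lemma piE_subset_cyclic (H K : {group gT}) : H \subset G -> K \subset G ->
  (Defs.piE H \subset Defs.piE K) = (H \subset K).
Proof.
move=> sHG sKG; apply/idP/idP => [sHK_piE | sHK].
  have [i Hi iE] := card_in_piE_cyclic sHG.
  have := subsetP sHK_piE i Hi; rewrite inE => /existsP[y /andP[Ky /eqP oy]].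
  by rewrite -(cardSg_cyclic cycG sHG sKG) -iE -oy order_dvdG.
apply/subsetP => i; rewrite !inE => /existsP[x /andP[Hx oxi]].
by apply/existsP; exists x; rewrite (subsetP sHK).
Qed.

Lemma piE_inj_cyclic (H K : {group gT}) : H \subset G -> K \subset G ->
  Defs.piE H = Defs.piE K -> H = K.
Proof.
move=> sHG sKG eqHK; apply/val_inj/eqP; rewrite /= eqEsubset.
by rewrite -(piE_subset_cyclic sHG sKG) -(piE_subset_cyclic sKG sHG) eqHK subxx.
Qed.

End CyclicOrderSpectrum.

Lemma cyclic_Zp n : cyclic (Zp n).
Proof.
apply: (cyclicS (subsetT _)); apply/cyclicP; exists (Zp1 : 'I_(Zp_trunc n).+2).
exact: (@Zp_cycle (Zp_trunc n).+1).
Qed.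

Theorem theorem2p3 (n : nat) (hn : 0 < n) :
  exists f : {group 'Z_n} -> {set {group 'Z_n}},
    [/\ {in subgroups (Zp n) &, injective f},
        f @: subgroups (Zp n) = PiT (Zp n)
      & {in subgroups (Zp n) &, forall H K : {group 'Z_n},
           (H \subset K) = le_cls (f H) (f K)}].
Proof.
have cycZ := cyclic_Zp n.
exists (piclass (Zp n)); split => // [H K sHZ sKZ eqHK | H K sHZ sKZ].
  have eq_piE := piclass_inj_piE sHZ eqHK.
  by rewrite !inE in sHZ sKZ; apply: (piE_inj_cyclic cycZ sHZ sKZ).
rewrite le_cls_piclass //; rewrite !inE in sHZ sKZ.
by rewrite (piE_subset_cyclic cycZ sHZ sKZ).
Qed.
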